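(* Modularity is not relatively monotonic: there exist graphs $G=(V,E)$ and $G'=(V,E')$ on the same node set and clusterings $C,D$ of $V$ such that $G'$ is a $C$-consistent improvement of $G$, $G$ is a $D$-consistent improvement of $G'$, and $Q_{\mathrm{mod}}(G,C)\ge Q_{\mathrm{mod}}(G,D)$, but $Q_{\mathrm{mod}}(G',C)<Q_{\mathrm{mod}}(G',D)$.
   Context: A (symmetric weighted) graph is a pair $G=(V,E)$ of a finite set $V$ and $E:V\times V\to\mathbb{R}_{\ge 0}$ symmetric; self loops allowed. A clustering is a partition of $V$ into nonempty disjoint clusters; write $i\sim_C j$ if $i,j$ lie in the same cluster of $C$. For $c\subseteq V$, $v_c=\sum_{i\in c}\sum_{j\in V}E(i,j)$ and $w_c=\sum_{i,j\in c}E(i,j)$. Modularity: $Q_{\mathrm{mod}}(G,C)=\sum_{c\in C}\left(\frac{w_c}{v_V}-\left(\frac{v_c}{v_V}\right)^2\right)$ (defined when $v_V>0$). A graph $G'=(V,E')$ is a $C$-consistent improvement of $G=(V,E)$ if $E'(i,j)\ge E(i,j)$ whenever $i\sim_C j$ and $E'(i,j)\le E(i,j)$ whenever $i\not\sim_C j$. *)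

From HB Require Import structures.
From mathcomp Require Import all_boot all_order all_algebra.
From mathcomp Require Import reals.
Set Implicit Arguments. Unset Strict Implicit. Unset Printing Implicit Defensive.
Import Order.TTheory GRing.Theory Num.Theory.
Local Open Scope ring_scope.

(* A symmetric weighted graph on the finite node set V: nonnegative symmetric
   weight function (self loops allowed). *)
Definition is_graph (R : realType) (V : finType) (E : V -> V -> R) : Prop :=
  (forall i j, 0 <= E i j) /\ (forall i j, E i j = E j i).

Definition is_clustering (V : finType) (C : {set {set V}}) : Prop :=
  partition C [set: V].

Definition same_cluster (V : finType) (C : {set {set V}}) (i j : V) : Prop :=
  exists2 c, c \in C & (i \in c) && (j \in c).

Definition vol (R : realType) (V : finType) (E : V -> V -> R) (c : {set V}) : R :=
  \sum_(i in c) \sum_(j : V) E i j.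

Definition win (R : realType) (V : finType) (E : V -> V -> R) (c : {set V}) : R :=
  \sum_(i in c) \sum_(j in c) E i j.

Definition Qmod (R : realType) (V : finType) (E : V -> V -> R) (C : {set {set V}}) : R :=
  \sum_(c in C) (win E c / vol E [set: V] - (vol E c / vol E [set: V]) ^+ 2).

Definition consistent_improvement (R : realType) (V : finType)
  (C : {set {set V}}) (E E' : V -> V -> R) : Prop :=
  forall i j, (same_cluster C i j -> E i j <= E' i j) /\
              (~ same_cluster C i j -> E' i j <= E i j).

From HB Require Import structures.
From mathcomp Require Import all_boot all_order all_algebra.
From mathcomp Require Import reals lra.
Import Order.TTheory GRing.Theory Num.Theory.
Local Open Scope ring_scope.

(* Counterexample on three nodes: a heavy self loop at 0, an edge 0-2, and an
   edge 1-2 that is deleted in G'.  The deletion is consistent both with the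
   singleton clustering C (it removes an inter-cluster edge) and, read
   backwards, with the one-cluster clustering D (it adds an intra-cluster
   edge).  Modularity of D is always 0.  Modularity of C is 0 in G and -2/25
   in G': deleting the edge raises the self loop's share of the volume from
   3/7 to 3/5, but raises the sum of squared degree shares more, from 21/49
   to 17/25. *)

Section Clusterings.
Variable V : finType.

Definition singleton_clustering : {set {set V}} := [set [set x] | x : V].

Definition whole_clustering : {set {set V}} := [set [set: V]].

Lemma singleton_clustering_partition : is_clustering singleton_clustering.
Proof.
have [partP _] := @indexed_partition V V predT (fun x => [set x])
  (fun i j _ _ neq_ji => ltac:(by rewrite disjoints1 in_set1 eq_sym))
  (fun i _ => ltac:(by apply/set0Pn; exists i; rewrite set11)).
have cover_singletons : cover singleton_clustering = [set: V].
  apply/setP => x; rewrite in_setT cover_imset.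
  by apply/bigcupP; exists x; rewrite ?in_set1.
by move: partP; rewrite cover_singletons.
Qed.

Lemma whole_clustering_partition (x0 : V) : is_clustering whole_clustering.
Proof.
rewrite /is_clustering /partition cover1 trivIset1 in_set1 eqxx /=.
by apply/negP => /eqP/setP/(_ x0); rewrite in_setT in_set0.
Qed.

Lemma same_singleton_cluster (i j : V) :
  same_cluster singleton_clustering i j -> i = j.
Proof. by case=> _ /imsetP[x _ ->] /andP[]; rewrite !in_set1 => /eqP-> /eqP->. Qed.

Lemma same_whole_cluster (i j : V) : same_cluster whole_clustering i j.
Proof. by exists [set: V]; rewrite ?in_set1 ?in_setT. Qed.

Variable R : realType.
Implicit Types E F : V -> V -> R.

Lemma consistent_improvement_singleton E F :
  (forall i, E i i <= F i i) -> (forall i j, i != j -> F i j <= E i j) ->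
  consistent_improvement singleton_clustering E F.
Proof.
move=> le_diag le_offdiag i j; split=> [/same_singleton_cluster-> //|not_same].
by apply: le_offdiag; apply: contra_notN not_same => /eqP->; exists [set j];
  rewrite ?imset_f ?set11.
Qed.

Lemma consistent_improvement_whole E F :
  (forall i j, E i j <= F i j) -> consistent_improvement whole_clustering E F.
Proof.
by move=> le_EF i j; split=> // not_same; case: not_same; apply: same_whole_cluster.
Qed.

Lemma Qmod_whole E : vol E [set: V] != 0 -> Qmod E whole_clustering = 0.
Proof.
move=> vol_neq0; rewrite /Qmod big_set1.
suff -> : win E [set: V] = vol E [set: V] by rewrite divff // expr1n subrr.
by apply: eq_bigr => i _; apply: eq_bigl => j; rewrite in_setT.
Qed.

Lemma Qmod_singleton E :
  Qmod E singleton_clustering =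
  \sum_x (E x x / vol E [set: V] - ((\sum_j E x j) / vol E [set: V]) ^+ 2).
Proof.
rewrite /Qmod big_imset /=; last by move=> x y _ _; apply: set1_inj.
by apply: eq_bigr => x _; rewrite /win /vol !big_set1.
Qed.

Lemma vol_setT E : vol E [set: V] = \sum_i \sum_j E i j.
Proof. by apply: eq_bigl => i; rewrite in_setT. Qed.

End Clusterings.

Lemma is_graph_nat (R : realType) (V : finType) (e : V -> V -> nat) :
  (forall i j, e i j = e j i) -> is_graph (fun i j => (e i j)%:R : R).
Proof. by move=> e_sym; split=> i j; [exact: ler0n | rewrite e_sym]. Qed.

Definition weight (i j : 'I_3) : nat :=
  match val i, val j with
  | 0, 0 => 3 | 0, 2 | 2, 0 | 1, 2 | 2, 1 => 1 | _, _ => 0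
  end%N.

Definition weight' (i j : 'I_3) : nat :=
  match val i, val j with
  | 0, 0 => 3 | 0, 2 | 2, 0 => 1 | _, _ => 0
  end%N.

Lemma weight_sym i j : weight i j = weight j i.
Proof. by case: i j => [[|[|[|?]]] ?] [[|[|[|?]]] ?]. Qed.

Lemma weight'_sym i j : weight' i j = weight' j i.
Proof. by case: i j => [[|[|[|?]]] ?] [[|[|[|?]]] ?]. Qed.

Lemma weight'_le i j : (weight' i j <= weight i j)%N.
Proof. by case: i j => [[|[|[|?]]] ?] [[|[|[|?]]] ?]. Qed.

Lemma weight'_diag i : weight' i i = weight i i.
Proof. by case: i => [[|[|[|?]]] ?]. Qed.

Theorem theorem4 (R : realType) :
  exists (V : finType) (E E' : V -> V -> R) (C D : {set {set V}}),
    is_graph E /\ is_graph E' /\ is_clustering C /\ is_clustering D /\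
    0 < vol E [set: V] /\ 0 < vol E' [set: V] /\
    consistent_improvement C E E' /\ consistent_improvement D E' E /\
    Qmod E D <= Qmod E C /\ Qmod E' C < Qmod E' D.
Proof.
pose E i j : R := (weight i j)%:R; pose E' i j : R := (weight' i j)%:R.
have volE : vol E [set: 'I_3] = 7.
  by rewrite vol_setT !big_ord_recr !big_ord0 /E /weight /=; lra.
have volE' : vol E' [set: 'I_3] = 5.
  by rewrite vol_setT !big_ord_recr !big_ord0 /E' /weight' /=; lra.
exists 'I_3, E, E', (singleton_clustering 'I_3), (whole_clustering 'I_3).
split; first exact: is_graph_nat weight_sym.
split; first exact: is_graph_nat weight'_sym.
split; first exact: singleton_clustering_partition.
split; first exact: whole_clustering_partition ord0.
split; first by rewrite volE.
split; first by rewrite volE'.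
split.
  by apply: consistent_improvement_singleton => [i|i j _];
    rewrite /E /E' ?weight'_diag // ler_nat weight'_le.
split.
  by apply: consistent_improvement_whole => i j; rewrite ler_nat weight'_le.
rewrite !Qmod_whole ?volE ?volE' ?pnatr_eq0 // !Qmod_singleton volE volE'.
rewrite !big_ord_recr !big_ord0 /E /E' /weight /weight' /=.
split; lra.
Qed.
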